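(* Let $A=\bigoplus_{j=1}^K C(\mathbb T)\otimes M_{n_j}$ and $B=\bigoplus_{i=1}^L C(\mathbb T)\otimes M_{\ell_i}$, and let $\varphi:A\to B$ be a $*$-homomorphism of Type A with multiplicity constants $(a_{i,j})$. Then $\varphi$ is homotopic to a $*$-homomorphism $\psi:A\to B$ of Type B with the same multiplicity constants $(a_{i,j})$.
   Context: Identify $C(\mathbb T)$ with $\{f\in C([0,1]):f(0)=f(1)\}$ via $t\mapsto e^{2\pi i t}$; thus elements of $C(\mathbb T)\otimes M_n$ are continuous $f:[0,1]\to M_n$ with $f(0)=f(1)$, and for $z\in\mathbb T$, $f(z)\in M_n$ denotes the value at the point $z$. $\Sigma_a$ is the symmetric group; for $\sigma\in\Sigma_a$, $v_\sigma\in\mathcal U_a$ is the permutation matrix with $v_\sigma\,\mathrm{diag}(x_1,\dots,x_a)\,v_\sigma^*=\mathrm{diag}(x_{\sigma^{-1}(1)},\dots,x_{\sigma^{-1}(a)})$. Elementary Type A maps: a $*$-homomorphism $\varphi:C(\mathbb T)\otimes M_n\to C(\mathbb T)\otimes M_\ell$ is of Type A if there is a data tuple $(a,\sigma,\lambda_1,\dots,\lambda_a,w)$ with $a\in\mathbb N_0$, $na\le\ell$, $\sigma\in\Sigma_a$, continuous $\lambda_p:[0,1]\to\mathbb T$ with $\lambda_{\sigma(p)}(0)=\lambda_p(1)$ for all $p$, and a continuous path $w:[0,1]\to\mathcal U_a$ with $w(0)=I_a$, $w(1)=v_\sigma$, such that, with $u(t)=\mathrm{diag}(w(t)\otimes I_n,I_{\ell-na})$,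 $\varphi(f)(t)=u(t)\,\mathrm{diag}(f(\lambda_1(t)),\dots,f(\lambda_a(t)),0_{\ell-na})\,u(t)^*$ for $t\in[0,1]$. The number $a$ is the multiplicity. It is of Type B if moreover $\sigma$ is the identity permutation; of Type C if it is of Type B and $w\equiv I_a$; of Type D if it is of Type C and $\lambda_p(0)=\lambda_p(1)=1$ for every $p$. General case: for $A,B$ as in the claim, $\varphi:A\to B$ is of Type A if $\varphi=(\varphi_1,\dots,\varphi_L)$ with $\varphi_i(g_1,\dots,g_K)=\mathrm{diag}(\varphi_{i,1}(g_1),\dots,\varphi_{i,K}(g_K),0,\dots,0)$, where each $\varphi_{i,j}:C(\mathbb T)\otimes M_{n_j}\to C(\mathbb T)\otimes M_{a_{i,j}n_j}$ is an elementary Type A map of multiplicity $a_{i,j}$ and $\sum_j a_{i,j}n_j\le\ell_i$; the $a_{i,j}$ are the multiplicity constants. $\varphi$ is of Type B (resp. C, D) if every $\varphi_{i,j}$ is. Two $*$-homomorphisms $\varphi_0,\varphi_1:A\to B$ are homotopic if there is a family $(\varphi_s)_{s\in[0,1]}$ of $*$-homomorphisms $A\to B$ with $s\mapsto\varphi_s(x)$ norm continuous for every $x\in A$. *)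

From HB Require Import structures.
From mathcomp Require Import all_boot all_order all_algebra all_fingroup.
From mathcomp Require Import complex mxtens.
From mathcomp Require Import all_classical all_reals all_analysis.
Set Implicit Arguments. Unset Strict Implicit. Unset Printing Implicit Defensive.
Import Order.TTheory GRing.Theory Num.Theory.
Local Open Scope ring_scope.
Local Open Scope classical_set_scope.

Section Defs.
Variable R : realType.

Definition cabs (z : R[i]) : R := Normc.normc z.

Definition in01 (t : R) : Prop := 0 <= t <= 1.

Definition adjmx m n (M : 'M[R[i]]_(m, n)) : 'M[R[i]]_(n, m) := (map_mx conjc M)^T.

Definition unitarymx a (M : 'M[R[i]]_a) : Prop :=
  M *m adjmx M = 1%:M /\ adjmx M *m M = 1%:M.

Definition cont01C (f : R -> R[i]) : Prop :=
  forall t0, in01 t0 -> forall e : R, 0 < e -> exists2 d : R, 0 < d &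
    forall t, in01 t -> `|t - t0| < d -> cabs (f t - f t0) < e.

Definition cont01M m n (f : R -> 'M[R[i]]_(m, n)) : Prop :=
  forall t0, in01 t0 -> forall e : R, 0 < e -> exists2 d : R, 0 < d &
    forall t, in01 t -> `|t - t0| < d ->
      forall k l, cabs (f t k l - f t0 k l) < e.

(* elements of C(T) (x) M_n : continuous f : [0,1] -> M_n with f 0 = f 1 *)
Definition CTM n (f : R -> 'M[R[i]]_n) : Prop := cont01M f /\ f 0 = f 1.

Definition expi (s : R) : R[i] := Complex (cos (2 * pi * s)) (sin (2 * pi * s)).

(* value of f at the point z of T: f(s) for some s in [0,1] with e^{2 pi i s} = z
   (well defined on T since f 0 = f 1) *)
Definition evalT n (f : R -> 'M[R[i]]_n) (z : R[i]) : 'M[R[i]]_n :=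
  f (xget 0 [set s | in01 s /\ expi s = z]).

(* permutation matrix v_sigma with v diag(x) v^* = diag(x_{sigma^-1 1}, ...) *)
Definition vperm a (sigma : 'S_a) : 'M[R[i]]_a :=
  \matrix_(i, j) ((i == sigma j)%:R).

(* direct sums: A = (+)_{j<K} C(T) (x) M_{n_j} *)
Definition Alg K (n : 'I_K -> nat) := forall j : 'I_K, R -> 'M[R[i]]_(n j).

Definition inAlg K (n : 'I_K -> nat) (g : Alg n) : Prop := forall j, CTM (g j).

Definition eqAlg K (n : 'I_K -> nat) (g h : Alg n) : Prop :=
  forall j t, in01 t -> g j t = h j t.

Definition addA K (n : 'I_K -> nat) (g h : Alg n) : Alg n :=
  fun j t => g j t + h j t.
Definition scaleA K (n : 'I_K -> nat) (c : R[i]) (g : Alg n) : Alg n :=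
  fun j t => c *: g j t.
Definition mulA K (n : 'I_K -> nat) (g h : Alg n) : Alg n :=
  fun j t => g j t *m h j t.
Definition starA K (n : 'I_K -> nat) (g : Alg n) : Alg n :=
  fun j t => adjmx (g j t).

Definition is_starhom K L (n : 'I_K -> nat) (l : 'I_L -> nat)
    (phi : Alg n -> Alg l) : Prop :=
  (forall g, inAlg g -> inAlg (phi g)) /\
  (forall g h, inAlg g -> inAlg h ->
     eqAlg (phi (addA g h)) (addA (phi g) (phi h))) /\
  (forall c g, inAlg g -> eqAlg (phi (scaleA c g)) (scaleA c (phi g))) /\
  (forall g h, inAlg g -> inAlg h ->
     eqAlg (phi (mulA g h)) (mulA (phi g) (phi h))) /\
  (forall g, inAlg g -> eqAlg (phi (starA g)) (starA (phi g))).

Definition elemFormula n a (lam : 'I_a -> R -> R[i]) (w : R -> 'M[R[i]]_a)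
    (f : R -> 'M[R[i]]_n) (t : R) : 'M[R[i]]_(a * n) :=
  let u := w t *t (1%:M : 'M[R[i]]_n) in
  u *m (\sum_(p < a) (delta_mx p p : 'M[R[i]]_a) *t evalT f (lam p t)) *m adjmx u.

Definition elem_data a (sigma : 'S_a) (lam : 'I_a -> R -> R[i])
    (w : R -> 'M[R[i]]_a) : Prop :=
  (forall p, cont01C (lam p) /\ forall t, in01 t -> cabs (lam p t) = 1) /\
  (forall p, lam (sigma p) 0 = lam p 1) /\
  cont01M w /\ (forall t, in01 t -> unitarymx (w t)) /\
  w 0 = 1%:M /\ w 1 = vperm sigma.

(* elementary Type A (isB = false) / Type B (isB = true) map of multiplicity a
   from C(T) (x) M_n to C(T) (x) M_{a n} *)
Definition elemType (isB : bool) n a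
    (Phi : (R -> 'M[R[i]]_n) -> (R -> 'M[R[i]]_(a * n))) : Prop :=
  exists sigma lam w,
    elem_data sigma lam w /\ (isB -> sigma = 1%g) /\
    forall f, CTM f -> forall t, in01 t -> Phi f t = elemFormula lam w f t.

Definition padmx s l (M : 'M[R[i]]_s) : 'M[R[i]]_l :=
  \matrix_(k, k')
    match (insub (nat_of_ord k) : option 'I_s), (insub (nat_of_ord k') : option 'I_s) with
    | Some x, Some y => M x y
    | _, _ => 0
    end.

Definition mapType (isB : bool) K L (n : 'I_K -> nat) (l : 'I_L -> nat)
    (phi : Alg n -> Alg l) (a : 'I_L -> 'I_K -> nat) : Prop :=
  (forall i, \sum_(j < K) a i j * n j <= l i)%N /\
  exists Phi : forall (i : 'I_L) (j : 'I_K),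
      (R -> 'M[R[i]]_(n j)) -> (R -> 'M[R[i]]_(a i j * n j)),
    (forall i j, elemType isB (Phi i j)) /\
    forall g, inAlg g -> forall i t, in01 t ->
      phi g i t = @padmx _ (l i) (\mxdiag_(j < K) Phi i j (g j) t).

Definition typeA K L (n : 'I_K -> nat) (l : 'I_L -> nat) phi a :=
  @mapType false K L n l phi a.
Definition typeB K L (n : 'I_K -> nat) (l : 'I_L -> nat) phi a :=
  @mapType true K L n l phi a.

(* s |-> phis s x is norm continuous on [0,1] for every x in A
   (norm: sup over t in [0,1] and matrix entries of the modulus) *)
Definition pointwise_norm_cont K L (n : 'I_K -> nat) (l : 'I_L -> nat)
    (phis : R -> Alg n -> Alg l) : Prop :=
  forall g, inAlg g -> forall s0, in01 s0 -> forall e : R, 0 < e ->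
    exists2 d : R, 0 < d & forall s, in01 s -> `|s - s0| < d ->
      forall i t, in01 t -> forall k k',
        cabs (phis s g i t k k' - phis s0 g i t k k') < e.

End Defs.

From Pilot Require Import Defs.
From HB Require Import structures.
From mathcomp Require Import all_boot all_order all_algebra all_fingroup.
From mathcomp Require Import complex mxtens.
From mathcomp Require Import all_classical all_reals all_analysis.
From mathcomp Require Import ring lra.
Import Order.TTheory GRing.Theory Num.Theory.
Import numFieldNormedType.Exports.
Local Open Scope ring_scope.

(* Write phi_i(g)(t) = w(t) diag(g(lam_p(t))) w(t)^* blockwise.  As w(0) = 1,
   phi_i(g) at the base point is diag(g(lam_p(0))).  Precomposing g with a loop
   of the circle that contracts it to the point 1 is a *-endomorphism, so
   contracting the evaluation points at the base point along arcs to 1 gives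
   *-homomorphisms; running such a contraction backwards before, and forwards
   after, t |-> phi_i(g)(t) extends it to a loop on [-1, 2], and reparametrizing
   [0, 1] onto a growing part of [-1, 2] is a homotopy of *-homomorphisms.  At
   its end all evaluation points start and end at 1, and while they all sit at
   1 the unitary path can be led back to the identity, so the permutation
   disappears and the map is of Type B. *)

(* [P u v e] reads "u and v are e-close"; the same notion serves for complex-
   and for matrix-valued functions. *)
Definition cont_in {R : realType} {X : Type} (P : X -> X -> R -> Prop)
    (f : R -> X) (a b : R) : Prop :=
  forall x0, a <= x0 <= b -> forall e, 0 < e -> exists2 d : R, 0 < d &
    forall x, a <= x <= b -> `|x - x0| < d -> P (f x) (f x0) e.

Section IntervalContinuity.
Context {R : realType} {X : Type} {P : X -> X -> R -> Prop}.
Implicit Types (f g : R -> X) (a b c d e : R).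

Lemma cont_in_eq {f g a b} : cont_in P g a b ->
  (forall x, a <= x <= b -> f x = g x) -> cont_in P f a b.
Proof.
move=> hg fg x0 hx0 e e0; have [r r0 hr] := hg x0 hx0 e e0.
by exists r => // x hx xr; rewrite !fg //; apply: hr.
Qed.

Lemma cont_in_const (u : X) a b : (forall e, 0 < e -> P u u e) ->
  cont_in P (fun _ => u) a b.
Proof. by move=> Pu x0 _ e e0; exists 1 => // x _ _; apply: Pu. Qed.

Lemma cont_in_glue {f a} c {b} : a <= c -> c <= b ->
  cont_in P f a c -> cont_in P f c b -> cont_in P f a b.
Proof.
move=> ac cb hl hr x0 /andP[ax0 x0b] e e0.
have [x0c|cx0|->] := ltgtP x0 c.
- have [r r0 hx] := hl x0 (ltac:(by rewrite ax0 ltW)) e e0.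
  exists (Order.min r (c - x0)); first by rewrite lt_min r0 subr_gt0.
  move=> x /andP[ax xb]; rewrite lt_min => /andP[xr]; rewrite ltr_norml => /andP[_ xc].
  by apply: hx; rewrite ?ax //=; lra.
- have [r r0 hx] := hr x0 (ltac:(by rewrite x0b ltW)) e e0.
  exists (Order.min r (x0 - c)); first by rewrite lt_min r0 subr_gt0.
  move=> x /andP[ax xb]; rewrite lt_min => /andP[xr]; rewrite ltr_norml => /andP[cx _].
  by apply: hx; rewrite ?xb ?andbT //; lra.
- have [r1 r10 h1] := hl c (ltac:(by rewrite ac lexx)) e e0.
  have [r2 r20 h2] := hr c (ltac:(by rewrite cb lexx)) e e0.
  exists (Order.min r1 r2); first by rewrite lt_min r10 r20.
  move=> x /andP[ax xb]; rewrite lt_min => /andP[xr1 xr2].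
  have [xc|cx] := leP x c; first by apply: h1; rewrite ?ax.
  by apply: h2; rewrite ?xb ?ltW.
Qed.

Lemma cont_in_affine (al be : R) {f F : R -> X} {a b c d} : cont_in P f a b ->
  (forall x, c <= x <= d -> a <= al * x + be <= b) ->
  (forall x, c <= x <= d -> F x = f (al * x + be)) -> cont_in P F c d.
Proof.
move=> hf hab hF; apply: cont_in_eq hF => x0 hx0 e e0.
have [r r0 hr] := hf _ (hab x0 hx0) e e0.
have K0 : 0 < `|al| + 1 by rewrite (le_lt_trans (normr_ge0 al)) // ltrDl.
exists (r / (`|al| + 1)); first by rewrite divr_gt0.
move=> x hx xr; apply: hr; first exact: hab.
rewrite opprD addrACA subrr addr0 -mulrBr normrM.
apply: (@le_lt_trans _ _ ((`|al| + 1) * `|x - x0|)).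
  by rewrite ler_wpM2r // lerDl.
by rewrite mulrC -ltr_pdivlMr.
Qed.

Lemma common_ball {k : nat} (x0 : R) (Q : 'I_k -> R -> Prop) :
  (forall j, exists2 d : R, 0 < d & forall x, `|x - x0| < d -> Q j x) ->
  exists2 d : R, 0 < d & forall j x, `|x - x0| < d -> Q j x.
Proof.
elim: k Q => [|k IH] Q hQ; first by exists 1 => // -[].
have [d0 d00 h0] := hQ ord0.
have [d1 d10 h1] := IH (fun j => Q (lift ord0 j)) (fun j => hQ (lift ord0 j)).
exists (Order.min d0 d1); first by rewrite lt_min d00 d10.
move=> j x; rewrite lt_min => /andP[x0' x1'].
by case: (unliftP ord0 j) => [j'|] ->; [apply: h1 | apply: h0].
Qed.

End IntervalContinuity.

Section UniformContinuity.
Context {R : realType} {X : Type} {P : X -> X -> R -> Prop}.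
Hypothesis Psym : forall {u v e}, P u v e -> P v u e.
Hypothesis Ptri : forall {u v w e1 e2}, P u v e1 -> P v w e2 -> P u w (e1 + e2).
Context {f : R -> X}.
Local Open Scope classical_set_scope.

Definition unif_cont_upto (e a c : R) := exists2 d : R, 0 < d &
  forall x y, a <= x <= c -> a <= y <= c -> `|x - y| < d -> P (f x) (f y) e.

Lemma unif_cont_upto_extend {a c c' s r e : R} : 0 < r -> s - r < c ->
  c' <= s + r ->
  (forall x, a <= x <= c' -> `|x - s| < r *+ 2 -> P (f x) (f s) (e / 2)) ->
  unif_cont_upto e a c -> unif_cont_upto e a c'.
Proof.
move=> r0 sc c's near_s [d d0 hd].
exists (Order.min d r); first by rewrite lt_min d0 r0.
move=> x y /andP[ax xc'] /andP[ay yc']; rewrite lt_min => /andP[xyd xyr].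
have [/andP[xc yc]|far] := boolP ((x <= c) && (y <= c)).
  by apply: hd; rewrite ?ax ?ay.
have [xs ys] : `|x - s| < r *+ 2 /\ `|y - s| < r *+ 2.
  move: far xyr; rewrite negb_and -!ltNge !ltr_norml mulr2n.
  by case/orP => ? /andP[? ?]; split; apply/andP; split; lra.
rewrite (splitr e); apply: Ptri (Psym (near_s y _ ys)).
  by apply: near_s xs; rewrite ax.
by rewrite ay.
Qed.

(* Heine--Cantor, proved by pushing the supremum of the good right endpoints. *)
Lemma cont_in_unif {a b : R} (e : R) : a <= b -> cont_in P f a b -> 0 < e ->
  unif_cont_upto e a b.
Proof.
move=> ab hf e0.
pose S := [set c | a <= c <= b /\ unif_cont_upto e a c].
have aab : a <= a <= b by rewrite lexx ab.
have Sa : S a.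
  split=> //; exists 1 => // x y /andP[ax xa] /andP[ay ya] _.
  have -> : x = a by apply/eqP; rewrite eq_le xa ax.
  have -> : y = a by apply/eqP; rewrite eq_le ya ay.
  have [r r0 hr] := hf a aab e e0.
  by apply: hr; rewrite ?subrr ?normr0.
have supS : has_sup S by split; [exists a | exists b => c [/andP[_ ->]]].
set s := sup S.
have sab : a <= s <= b.
  rewrite sup_upper_bound //=.
  by apply: ge_sup; [exists a | move=> c [/andP[_ ->]]].
have [r r0 hr] := hf s sab (e / 2) (ltac:(by rewrite divr_gt0)).
have r20 : 0 < r / 2 by rewrite divr_gt0.
have [c [/andP[ac cb] Uc] sc] := sup_adherent r20 supS.
pose c' := Order.min b (s + r / 2).
have Sc' : S c'.
  split; first by rewrite ge_min lexx le_min ab /=; move: sab => /andP[? ?]; lra.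
  apply: (unif_cont_upto_extend r20 sc _ _ Uc).
    by rewrite ge_min lexx orbT.
  move=> x /andP[ax]; rewrite le_min => /andP[xb _] xs.
  by apply: hr; [rewrite ax xb | rewrite mulr2n -splitr in xs].
have c'b : c' = b.
  have : c' <= s by apply: sup_upper_bound.
  by rewrite /c' ge_min => /orP[bs|]; [apply/min_idPl; lra | lra].
by rewrite -c'b; case: Sc'.
Qed.

End UniformContinuity.

Section UnitCircle.
Context {R : realType}.
Local Notation C := R[i].
Local Notation cabs := (@Defs.cabs R).
Local Notation expi := (@Defs.expi R).

Definition cdist_lt (u v : C) (e : R) := cabs (u - v) < e.
Definition mdist_lt {m n} (U V : 'M[C]_(m, n)) (e : R) :=
  forall k l, cabs (U k l - V k l) < e.

Lemma cabs0 : cabs 0 = 0.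
Proof. exact: Normc.normc0. Qed.

Lemma cabsB (u v : C) : cabs (u - v) = cabs (v - u).
Proof. by rewrite -opprB /cabs (normcN (v - u)). Qed.

Lemma cabs_triangle (u v w : C) : cabs (u - w) <= cabs (u - v) + cabs (v - w).
Proof. by have := le_normcD (u - v) (v - w); rewrite addrA subrK. Qed.

Lemma cabs_le_norms (x y : R) : cabs (x +i* y)%C <= `|x| + `|y|.
Proof.
rewrite /cabs /Normc.normc -(@ger0_norm _ (`|x| + `|y|)) ?addr_ge0 //.
rewrite -sqrtr_sqr; apply: ler_wsqrtr.
rewrite sqrrD !real_normK ?num_real //.
have : 0 <= `|x| * `|y| *+ 2 by rewrite mulrn_wge0 // mulr_ge0.
lra.
Qed.

Lemma cdist_refl (u : C) e : 0 < e -> cdist_lt u u e.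
Proof. by move=> e0; rewrite /cdist_lt subrr cabs0. Qed.

Lemma mdist_refl {m n} (U : 'M[C]_(m, n)) e : 0 < e -> mdist_lt U U e.
Proof. by move=> e0 k l; rewrite subrr cabs0. Qed.

Lemma mdist_sym {m n} {U V : 'M[C]_(m, n)} {e} : mdist_lt U V e -> mdist_lt V U e.
Proof. by move=> h k l; rewrite cabsB. Qed.

Lemma mdist_tri {m n} {U V W : 'M[C]_(m, n)} {e1 e2} :
  mdist_lt U V e1 -> mdist_lt V W e2 -> mdist_lt U W (e1 + e2).
Proof.
move=> h1 h2 k l; apply: le_lt_trans (cabs_triangle _ (V k l) _) _.
by rewrite ltrD.
Qed.

Lemma cont01C_cont_in (f : R -> C) : cont01C f <-> cont_in cdist_lt f 0 1.
Proof. by []. Qed.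

Lemma cont01M_cont_in {m n} (f : R -> 'M[C]_(m, n)) :
  cont01M f <-> cont_in mdist_lt f 0 1.
Proof. by []. Qed.

Lemma CTM_cont_in {n} {f : R -> 'M[C]_n} : CTM f -> cont_in mdist_lt f 0 1.
Proof. by case. Qed.

Lemma in01_0 : in01 (0 : R). Proof. by rewrite /in01 lexx ler01. Qed.
Lemma in01_1 : in01 (1 : R). Proof. by rewrite /in01 lexx ler01. Qed.

Lemma in01_mul (x y : R) : in01 x -> in01 y -> in01 (x * y).
Proof. by move=> /andP[x0 x1] /andP[y0 y1]; apply/andP; split; nra. Qed.

Lemma continuous_delta {f : R -> R} {x : R} : {for x, continuous f} ->
  forall e, 0 < e -> exists2 d : R, 0 < d & forall y, `|x - y| < d -> `|f x - f y| < e.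
Proof.
move=> /cvgr_dist_lt fx e e0; have /nbhs_ballP[d /= d0 hd] := fx e e0.
by exists d => // y xy; apply: hd.
Qed.

Lemma pi2_gt0 : 0 < 2 * pi :> R.
Proof. by rewrite mulr_gt0 ?pi_gt0. Qed.

Lemma expi_cabs x : cabs (expi x) = 1.
Proof. by rewrite /cabs /expi /Normc.normc cos2Dsin2 sqrtr1. Qed.

Lemma expi0 : expi 0 = 1.
Proof. by rewrite /expi mulr0 cos0 sin0. Qed.

Lemma expi1 : expi 1 = 1.
Proof. by rewrite /expi mulr1 mulr_natl cos2pi sin2pi. Qed.

Lemma expi_cont x e : 0 < e -> exists2 d : R, 0 < d &
  forall y, `|y - x| < d -> cabs (expi y - expi x) < e.
Proof.
move=> e0; have e20 : 0 < e / 2 by rewrite divr_gt0.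
have [d1 d10 hc] := continuous_delta (@continuous_cos R (2 * pi * x)) _ e20.
have [d2 d20 hs] := continuous_delta (@continuous_sin R (2 * pi * x)) _ e20.
exists (Order.min d1 d2 / (2 * pi)); first by rewrite divr_gt0 ?pi2_gt0 // lt_min d10 d20.
move=> y yx.
have : `|2 * pi * x - 2 * pi * y| < Order.min d1 d2.
  by rewrite -mulrBr normrM gtr0_norm ?pi2_gt0 // distrC mulrC -ltr_pdivlMr ?pi2_gt0.
rewrite lt_min => /andP[/hc c_close /hs s_close].
apply: le_lt_trans (cabs_le_norms _ _) _.
by rewrite (splitr e) ltrD // distrC.
Qed.

Lemma expi_cont_in a b : cont_in cdist_lt expi a b.
Proof.
move=> x0 _ e e0; have [d d0 hd] := expi_cont x0 e e0.
by exists d => // x _ /hd.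
Qed.

Lemma cos_eq1 {u : R} : 0 <= u <= pi *+ 2 -> cos u = 1 -> u = 0 \/ u = pi *+ 2.
Proof.
move=> /andP[u0 u2] cu; have pi0 := @pi_gt0 R.
have [upi|piu] := leP u pi.
  left; apply: (@cos_inj R); rewrite ?in_itv /= ?u0 ?upi ?lexx ?pi_ge0 //.
  by rewrite cu cos0.
right; suff : pi *+ 2 - u = 0 by lra.
apply: (@cos_inj R); rewrite ?in_itv /= ?lexx ?pi_ge0 //.
- by apply/andP; split; rewrite mulr2n; lra.
- by rewrite addrC cosD2pi cosN cu cos0.
Qed.

Lemma expi_inj {s r} : in01 s -> in01 r -> expi s = expi r ->
  s = r \/ (s = 0 /\ r = 1) \/ (s = 1 /\ r = 0).
Proof.
move=> /andP[s0 s1] /andP[r0 r1] [hc hs].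
have p2 := @pi2_gt0.
have dist_eq : `|2 * pi * s - 2 * pi * r| = 2 * pi * `|s - r|.
  by rewrite -mulrBr normrM gtr0_norm.
have : cos `|2 * pi * s - 2 * pi * r| = 1.
  by rewrite cos_norm cosB hc hs -!expr2 cos2Dsin2.
have : 0 <= `|2 * pi * s - 2 * pi * r| <= pi *+ 2.
  have : `|s - r| <= 1 by rewrite ler_norml; apply/andP; split; lra.
  by rewrite normr_ge0 dist_eq mulr2n /=; have := @pi_gt0 R; nra.
move=> range /(cos_eq1 range)[]; rewrite dist_eq => h.
  left; apply/eqP; rewrite -subr_eq0 -normr_eq0.
  by move/eqP: h; rewrite mulf_eq0 (negbTE (lt0r_neq0 p2)).
have sr : `|s - r| = 1.
  by apply: (mulfI (lt0r_neq0 p2)); rewrite h mulr1 mulr_natl.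
by case: (lerP 0 (s - r)) => h'; move: sr;
  [rewrite ger0_norm | rewrite ltr0_norm] => // sr; right; [right | left]; split; lra.
Qed.

Lemma unit_acos {x y : R} : x ^+ 2 + y ^+ 2 = 1 ->
  -1 <= x <= 1 /\ cos (acos x) = x /\ sin (acos x) = `|y|.
Proof.
move=> xy.
have hx : -1 <= x <= 1.
  have x2 : x ^+ 2 <= 1 by have := sqr_ge0 y; lra.
  by rewrite -ler_norml -(ler_pXn2r (_ : 0 < 2)%N) ?nnegrE // expr1n real_normK ?num_real.
split=> //; split; first by apply: acosK; rewrite in_itv.
by rewrite sin_acos // -sqrtr_sqr; congr Num.sqrt; lra.
Qed.

Lemma cabs1_expi (z : C) : cabs z = 1 -> exists2 s, in01 s & expi s = z.
Proof.
case: z => x y; rewrite /cabs /Normc.normc => h.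
have xy : x ^+ 2 + y ^+ 2 = 1.
  by rewrite -[LHS]sqr_sqrtr ?addr_ge0 ?sqr_ge0 // h expr1n.
have [hx [ca sa]] := unit_acos xy.
have p2 := @pi2_gt0; have a0 := acos_ge0 hx; have api := acos_lepi hx.
have acos2pi : acos x / (2 * pi) <= 1 / 2.
  by rewrite ler_pdivrMr //; lra.
case: (lerP 0 y) => y0.
  exists (acos x / (2 * pi)); first by rewrite /in01 divr_ge0 ?(ltW p2) //=; lra.
  by rewrite /expi mulrC divfK ?lt0r_neq0 // ca sa ger0_norm.
exists (1 - acos x / (2 * pi)).
  apply/andP; split; first by rewrite subr_ge0; lra.
  by rewrite lerBlDr lerDl divr_ge0 ?(ltW p2).
rewrite /expi mulrBr mulr1 [_ * (acos x / _)]mulrC divfK ?lt0r_neq0 //.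
by rewrite addrC mulr_natl cosD2pi sinD2pi cosN sinN ca sa ltr0_norm // opprK.
Qed.

Local Open Scope classical_set_scope.

(* [evalT] picks the parameter [angle01 z] in [0, 1]; [angle z] moves the
   parameter 1 to 0, so that it lies in [0, 1). *)
Definition angle01 (z : C) : R := xget 0 [set s | in01 s /\ expi s = z].
Definition angle (z : C) : R := if angle01 z == 1 then 0 else angle01 z.

Lemma angle01_in01 z : in01 (angle01 z).
Proof. by rewrite /angle01; case: xgetP => [x -> []|_]; last exact: in01_0. Qed.

Lemma expi_angle01 z : cabs z = 1 -> expi (angle01 z) = z.
Proof.
move=> /cabs1_expi[s s01 sz].
have ex_s : exists s, in01 s /\ expi s = z by exists s.
by rewrite /angle01; case: (xgetPex 0 ex_s).
Qed.

Lemma angle_lt1 z : 0 <= angle z < 1.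
Proof.
rewrite /angle; case: eqP => [_|]; first by rewrite lexx ltr01.
by have /andP[a0 a1] := angle01_in01 z; rewrite a0 lt_neqAle a1 andbT => /eqP.
Qed.

Lemma angle_in01 z : in01 (angle z).
Proof. by have /andP[a0 /ltW a1] := angle_lt1 z; apply/andP. Qed.

Lemma expi_angle z : cabs z = 1 -> expi (angle z) = z.
Proof.
move=> z1; rewrite /angle; case: eqP => [a1|_]; last exact: expi_angle01.
by rewrite expi0 -expi1 -a1 expi_angle01.
Qed.

Lemma evalTE n (f : R -> 'M[C]_n) z : evalT f z = f (angle01 z).
Proof. by []. Qed.

Lemma evalT_expi n (f : R -> 'M[C]_n) r : f 0 = f 1 -> in01 r ->
  evalT f (expi r) = f r.
Proof.
move=> f01 r01; have ex_r : exists s, in01 s /\ expi s = expi r by exists r.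
rewrite evalTE /angle01; case: (xgetPex 0 ex_r) => s01 /expi_inj.
by case/(_ s01 r01) => [->|[[-> ->]|[-> ->]]].
Qed.

Lemma evalT_angle n (f : R -> 'M[C]_n) z : f 0 = f 1 -> f (angle z) = evalT f z.
Proof. by move=> f01; rewrite evalTE /angle; case: eqP => // ->. Qed.

End UnitCircle.

Section BlockMatrices.
Context {R : realType}.
Local Notation C := R[i].
Local Notation cabs := (@Defs.cabs R).

Lemma padmx_dist {s} l {A B : 'M[C]_s} {e : R} : 0 < e ->
  mdist_lt A B e -> mdist_lt (padmx l A) (padmx l B) e.
Proof.
move=> e0 hAB k k'; rewrite !mxE.
case: (insub (k : nat) : option 'I_s) => [x|];
  case: (insub (k' : nat) : option 'I_s) => [y|] //; by rewrite subrr cabs0.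
Qed.

Lemma submxE {m n} (A B : 'M[C]_(m, n)) k l : (A - B) k l = A k l - B k l.
Proof. by rewrite !mxE. Qed.

Lemma mxdiag_dist {k} {p : 'I_k -> nat} {A B : forall j, 'M[C]_(p j)} {e : R} :
  0 < e -> (forall j, mdist_lt (A j) (B j) e) ->
  mdist_lt (\mxdiag_(j < k) A j) (\mxdiag_(j < k) B j) e.
Proof.
move=> e0 hAB r c; rewrite -submxE -mxdiagB /mxdiag /mxblock mxE.
case: (_ == _); last by rewrite mxE cabs0.
rewrite /conform_mx; case: eqP => [e1|_]; last by rewrite mxE cabs0.
case: eqP => [e2|_]; last by rewrite mxE cabs0.
by rewrite castmxE submxE; apply: hAB.
Qed.

Lemma tens_diag_entry {a n} (D : 'I_a -> 'M[C]_n) (p1 p2 : 'I_a) (k l : 'I_n) :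
  (\sum_(p < a) delta_mx p p *t D p) (mxtens_index (p1, k)) (mxtens_index (p2, l))
  = if p1 == p2 then D p1 k l else 0.
Proof.
rewrite summxE (bigD1 p1) //= tensmxE mxE eqxx big1 ?addr0.
  by rewrite eq_sym; case: (p1 == p2); rewrite ?mul1r ?mul0r.
by move=> p hp; rewrite tensmxE mxE (eq_sym p1 p) (negbTE hp) mul0r.
Qed.

Lemma tens_diag_dist {a n} {D D' : 'I_a -> 'M[C]_n} {e : R} : 0 < e ->
  (forall p, mdist_lt (D p) (D' p) e) ->
  mdist_lt (\sum_(p < a) delta_mx p p *t D p) (\sum_(p < a) delta_mx p p *t D' p) e.
Proof.
move=> e0 hD k k'; case: (mxtens_indexP k) => p1 k1; case: (mxtens_indexP k') => p2 k2.
by rewrite !tens_diag_entry; case: eqP => _; [apply: hD | rewrite subrr cabs0].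
Qed.

Lemma cont_in_padmx {s} l {F : R -> 'M[C]_s} {a b} :
  cont_in mdist_lt F a b -> cont_in mdist_lt (fun x => padmx l (F x)) a b.
Proof.
move=> hF x0 hx0 e e0; have [d d0 hd] := hF x0 hx0 e e0.
by exists d => // x hx xd; apply: padmx_dist (hd x hx xd).
Qed.

Lemma cont_in_mxdiag {k} {p : 'I_k -> nat} {F : forall j, R -> 'M[C]_(p j)} {a b} :
  (forall j, cont_in mdist_lt (F j) a b) ->
  cont_in mdist_lt (fun x => \mxdiag_(j < k) F j x) a b.
Proof.
move=> hF x0 hx0 e e0.
have /common_ball[d d0 hd] : forall j, exists2 d : R, 0 < d &
    forall x, `|x - x0| < d -> a <= x <= b -> mdist_lt (F j x) (F j x0) e.
  by move=> j; have [d d0 hd] := hF j x0 hx0 e e0; exists d => // x xd /hd; apply.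
by exists d => // x hx xd; apply: mxdiag_dist => // j; apply: hd.
Qed.

Lemma cont_in_tens_diag {m n} {D : 'I_m -> R -> 'M[C]_n} {a b} :
  (forall p, cont_in mdist_lt (D p) a b) ->
  cont_in mdist_lt (fun x => \sum_(p < m) delta_mx p p *t D p x) a b.
Proof.
move=> hD x0 hx0 e e0.
have /common_ball[d d0 hd] : forall p, exists2 d : R, 0 < d &
    forall x, `|x - x0| < d -> a <= x <= b -> mdist_lt (D p x) (D p x0) e.
  by move=> p; have [d d0 hd] := hD p x0 hx0 e e0; exists d => // x xd /hd; apply.
by exists d => // x hx xd; apply: tens_diag_dist => // p; apply: hd.
Qed.

Lemma adjmx1 {a} : adjmx (1%:M : 'M[C]_a) = 1%:M.
Proof. by rewrite /adjmx map_mx1 trmx1. Qed.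

Lemma adjmx_tens {m n p q} (A : 'M[C]_(m, n)) (B : 'M[C]_(p, q)) :
  adjmx (A *t B) = adjmx A *t adjmx B.
Proof. by rewrite /adjmx map_mxT trmx_tens. Qed.

Lemma tensmx11 {a n} : (1%:M : 'M[C]_a) *t (1%:M : 'M[C]_n) = 1%:M.
Proof.
apply/matrixP => k k'.
case: (mxtens_indexP k) => p1 k1; case: (mxtens_indexP k') => p2 k2.
rewrite tensmxE !mxE (inj_eq (can_inj (@mxtens_indexK _ _))) xpair_eqE.
by case: (p1 == p2); case: (k1 == k2); rewrite ?mulr1n ?mulr0n ?mul1r ?mul0r.
Qed.

Lemma tens_diag_const {a n} (F : 'M[C]_n) :
  \sum_(p < a) delta_mx p p *t F = 1%:M *t F.
Proof.
apply/matrixP => k k'; rewrite mx1_sum_delta !mxE summxE summxE mulr_suml.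
by apply: eq_bigr => p _; rewrite mxE.
Qed.

Lemma unitary_tens_conj {a n} (U : 'M[C]_a) (F : 'M[C]_n) : Defs.unitarymx U ->
  (U *t 1%:M) *m (1%:M *t F) *m adjmx (U *t 1%:M) = 1%:M *t F.
Proof.
move=> [UU _]; rewrite adjmx_tens adjmx1 !tensmx_mul.
by rewrite mulmx1 mul1mx mulmx1 UU.
Qed.

Lemma elemFormula_eq {n a} {lam1 lam2 : 'I_a -> R -> C} {w1 w2 : R -> 'M[C]_a}
    {f1 f2 : R -> 'M[C]_n} {t1 t2 : R} :
  w1 t1 = w2 t2 -> (forall p, evalT f1 (lam1 p t1) = evalT f2 (lam2 p t2)) ->
  elemFormula lam1 w1 f1 t1 = elemFormula lam2 w2 f2 t2.
Proof.
move=> hw hl; rewrite /elemFormula hw.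
by congr (_ *m _ *m _); apply: eq_bigr => p _; rewrite hl.
Qed.

Lemma elemFormula_w1 {n a} {lam : 'I_a -> R -> C} {w : R -> 'M[C]_a}
    (f : R -> 'M[C]_n) {t : R} : w t = 1%:M ->
  elemFormula lam w f t = \sum_(p < a) delta_mx p p *t evalT f (lam p t).
Proof. by move=> w1; rewrite /elemFormula w1 tensmx11 adjmx1 mulmx1 mul1mx. Qed.

Lemma elemFormula_const {n a} {lam : 'I_a -> R -> C} {w : R -> 'M[C]_a}
    {f : R -> 'M[C]_n} {t : R} (M : 'M[C]_n) :
  Defs.unitarymx (w t) -> (forall p, evalT f (lam p t) = M) ->
  elemFormula lam w f t = 1%:M *t M.
Proof.
move=> wu hM; rewrite /elemFormula (eq_bigr (fun p => delta_mx p p *t M)).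
  by rewrite tens_diag_const unitary_tens_conj.
by move=> p _; rewrite hM.
Qed.

Lemma vperm1 {a} : vperm R (1%g : 'S_a) = 1%:M.
Proof. by apply/matrixP => x y; rewrite !mxE perm1. Qed.

End BlockMatrices.

Section Glue.
Context {R : realType} {X : Type}.

Definition glue3 (f g h : R -> X) (x : R) : X :=
  if x <= 0 then f x else if x < 1 then g x else h x.

Context {f g h : R -> X}.

Lemma glue3_le0 x : x <= 0 -> glue3 f g h x = f x.
Proof. by rewrite /glue3 => ->. Qed.

Lemma glue3_mid x : 0 < x < 1 -> glue3 f g h x = g x.
Proof. by rewrite /glue3 => /andP[x0 x1]; rewrite leNgt x0 x1. Qed.

Lemma glue3_ge1 x : 1 <= x -> glue3 f g h x = h x.
Proof. by move=> x1; rewrite /glue3 leNgt (lt_le_trans ltr01 x1) ltNge x1. Qed.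

Lemma glue3P (Q : X -> Prop) x : (x <= 0 -> Q (f x)) -> (0 < x < 1 -> Q (g x)) ->
  (1 <= x -> Q (h x)) -> Q (glue3 f g h x).
Proof.
move=> Qf Qg Qh; have [x0|x_gt0] := leP x 0; first by rewrite glue3_le0 //; apply: Qf.
have [x1|x_ge1] := ltP x 1.
  have x01 : 0 < x < 1 by rewrite x_gt0.
  by rewrite glue3_mid //; apply: Qg.
by rewrite glue3_ge1 //; apply: Qh.
Qed.

Lemma glue3_in01 x : f 0 = g 0 -> g 1 = h 1 -> 0 <= x <= 1 -> glue3 f g h x = g x.
Proof.
move=> fg gh /andP[x0 x1]; apply: (glue3P (fun u => u = g x)) => [x_le0|//|x_ge1].
  by have -> : x = 0 by apply/le_anti; rewrite x_le0.
by have -> : x = 1 by apply/le_anti; rewrite x1.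
Qed.

Lemma glue3_cont {P : X -> X -> R -> Prop} : f 0 = g 0 -> g 1 = h 1 ->
  cont_in P f (-1) 0 -> cont_in P g 0 1 -> cont_in P h 1 2 ->
  cont_in P (glue3 f g h) (-1) 2.
Proof.
move=> fg gh cf cg ch; apply: (cont_in_glue 0); rewrite ?lerN10 ?ler0n //.
  by apply: (cont_in_eq cf) => x /andP[_ x0]; apply: glue3_le0.
apply: (cont_in_glue 1); rewrite ?ler01 ?ler1n //.
  by apply: (cont_in_eq cg) => x; apply: glue3_in01.
by apply: (cont_in_eq ch) => x /andP[x1 _]; apply: glue3_ge1.
Qed.

End Glue.

Section Ramp.
Context {R : realType}.

Definition ramp (u : R) : R := if u <= 1 / 2 then 1 - 2 * u else 0.

Lemma ramp_in01 u : 0 <= u -> in01 (ramp u).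
Proof. by move=> u0; rewrite /ramp; case: leP => u2; apply/andP; split; lra. Qed.

Lemma ramp0 : ramp 0 = 1.
Proof. by rewrite /ramp ler_pdivlMr ?mul0r ?ler01 // mulr0 subr0. Qed.

Lemma ramp_le u : u <= 1 / 2 -> ramp u = 1 - 2 * u.
Proof. by rewrite /ramp => ->. Qed.

Lemma ramp_ge u : 1 / 2 <= u -> ramp u = 0.
Proof. by rewrite /ramp => u2; case: leP => // u2'; lra. Qed.

Context {X : Type} {P : X -> X -> R -> Prop}.
Hypothesis Prefl : forall u e, 0 < e -> P u u e.

Lemma cont_in_ramp {F : R -> X} : cont_in P F 0 1 ->
  cont_in P (fun u => F (ramp u)) 0 1.
Proof.
move=> hF; apply: (cont_in_glue (1 / 2)); try lra.
  apply: (cont_in_affine (-2) 1 hF) => u /andP[u0 u2].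
    by apply/andP; split; lra.
  by rewrite ramp_le //; congr F; lra.
apply: (cont_in_eq (cont_in_const (F 0) _ _ (Prefl _))) => u /andP[u2 _].
by rewrite ramp_ge.
Qed.

Lemma cont_in_ramp_left {F : R -> X} : cont_in P F 0 1 ->
  cont_in P (fun x => F (ramp (- x))) (-1) 0.
Proof.
move=> /cont_in_ramp hF; apply: (cont_in_affine (-1) 0 hF) => x /andP[x1 x0].
  by apply/andP; split; lra.
by rewrite mulN1r addr0.
Qed.

Lemma cont_in_ramp_right {F : R -> X} : cont_in P F 0 1 ->
  cont_in P (fun x => F (ramp (x - 1))) 1 2.
Proof.
move=> /cont_in_ramp hF; apply: (cont_in_affine 1 (-1) hF) => x /andP[x1 x2].
  by apply/andP; split; lra.
by rewrite mul1r.
Qed.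

End Ramp.

Section Tent.
Context {R : realType}.
Local Notation C := R[i].
Variable T : R.
Hypotheses (T_ge0 : 0 <= T) (T_lt1 : T < 1).

Definition tent (m r : R) : R :=
  if r <= T then m * r else m * (T / (1 - T) * (1 - r)).

Lemma tent_slope_bound {r} : T <= r <= 1 -> 0 <= T / (1 - T) * (1 - r) <= T.
Proof.
move=> /andP[Tr r1]; have T1 : 0 < 1 - T by rewrite subr_gt0.
have cT : T / (1 - T) * (1 - T) = T by rewrite divfK // lt0r_neq0.
have c0 : 0 <= T / (1 - T) by rewrite divr_ge0 // ltW.
by move: (T / (1 - T)) c0 cT => c c0 cT; apply/andP; split; nra.
Qed.

Lemma tent_in01 m r : in01 m -> in01 r -> in01 (tent m r).
Proof.
move=> /andP[m0 m1] /andP[r0 r1]; rewrite /tent; case: leP => rT.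
  by apply/andP; split; nra.
have Tr1 : T <= r <= 1 by rewrite (ltW rT) r1.
have /andP[c0 cT] := tent_slope_bound Tr1.
by apply/andP; split; nra.
Qed.

Lemma tent0 m : tent m 0 = 0.
Proof. by rewrite /tent T_ge0 mulr0. Qed.

Lemma tent1 m : tent m 1 = 0.
Proof. by rewrite /tent leNgt T_lt1 /= subrr !mulr0. Qed.

Lemma tent_angle01 m (z : C) : angle z <= T -> tent m (angle01 z) = m * angle z.
Proof.
by rewrite /angle; case: eqP => [->|_] zT; [rewrite tent1 mulr0 | rewrite /tent zT].
Qed.

Lemma tent_CTM {n} (f : R -> 'M[C]_n) m : CTM f -> in01 m ->
  CTM (fun r => f (tent m r)).
Proof.
move=> [/cont01M_cont_in fc f01] m01; split; last by rewrite tent0 tent1.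
apply/cont01M_cont_in; have /andP[m0 m1] := m01.
have T1 : 1 - T != 0 by rewrite subr_eq0 eq_sym lt_eqF.
apply: (cont_in_glue T) => //; first exact: ltW.
  apply: (cont_in_affine m 0 fc) => r /andP[r0 rT]; rewrite addr0.
    have r1 : r <= 1 by apply: le_trans rT (ltW T_lt1).
    by have := tent_in01 m r m01; rewrite /tent rT; apply; apply/andP.
  by rewrite /tent rT.
rewrite /tent; move: (T / (1 - T)) (divfK T1 T) (@tent_slope_bound) => c cT c_bound.
apply: (cont_in_affine (- (m * c)) (m * c) fc) => r /andP[Tr r1].
  have -> : - (m * c) * r + m * c = m * (c * (1 - r)) by ring.
  have /andP[c0 cr] : 0 <= c * (1 - r) <= T by apply: c_bound; rewrite Tr r1.
  by apply/andP; split; nra.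
congr f; case: leP => [rT|_]; last by ring.
have -> : r = T by apply/le_anti; rewrite rT Tr.
by rewrite -{1}cT; ring.
Qed.

End Tent.

Definition opA2 {R : realType} {k} {p : 'I_k -> nat}
    (bop : forall m, 'M[R[i]]_m -> 'M[R[i]]_m -> 'M[R[i]]_m) (g h : Alg R p) : Alg R p :=
  fun j t => bop _ (g j t) (h j t).

Definition opA1 {R : realType} {k} {p : 'I_k -> nat}
    (uop : forall m, 'M[R[i]]_m -> 'M[R[i]]_m) (g : Alg R p) : Alg R p :=
  fun j t => uop _ (g j t).

Section Homotopy.
Context {R : realType} {K L : nat} {n : 'I_K -> nat} {l : 'I_L -> nat}
  {a : 'I_L -> 'I_K -> nat}.
Local Notation C := R[i].
Local Notation cabs := (@Defs.cabs R).
Local Notation expi := (@Defs.expi R).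
Variable phi : Alg R n -> Alg R l.
Variables (lam : forall i j, 'I_(a i j) -> R -> C) (w : forall i j, R -> 'M[C]_(a i j)).
Hypothesis phi_starhom : is_starhom phi.
Hypothesis lam_w_data : forall i j, exists sigma, elem_data sigma (lam i j) (w i j).
Hypothesis phiE : forall g, inAlg g -> forall i t, in01 t ->
  phi g i t = padmx (l i) (\mxdiag_(j < K) elemFormula (lam i j) (w i j) (g j) t).

Lemma phi_cont {g} i : inAlg g -> cont_in mdist_lt (phi g i) 0 1.
Proof. by move=> hg; apply: CTM_cont_in; apply: phi_starhom.1. Qed.

Lemma phi_periodic {g} i : inAlg g -> phi g i 0 = phi g i 1.
Proof. by move=> hg; have [] := phi_starhom.1 g hg i. Qed.

Lemma lam_cont i j p : cont_in cdist_lt (lam i j p) 0 1.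
Proof. by have [? [/(_ p)[]]] := lam_w_data i j. Qed.

Lemma lam_cabs i j p t : in01 t -> cabs (lam i j p t) = 1.
Proof. by have [? [/(_ p)[_ lam1] _]] := lam_w_data i j; exact: lam1. Qed.

Lemma w_cont i j : cont_in mdist_lt (w i j) 0 1.
Proof. by have [? [_ [_ []]]] := lam_w_data i j. Qed.

Lemma w_unitary i j t : in01 t -> Defs.unitarymx (w i j t).
Proof. by have [? [_ [_ [_ [wu _]]]]] := lam_w_data i j; exact: wu. Qed.

Lemma w0 i j : w i j 0 = 1%:M.
Proof. by have [? [_ [_ [_ [_ []]]]]] := lam_w_data i j. Qed.

Definition angle_bound i j : R := \big[Order.max/0]_(p < a i j)
  Order.max (angle (lam i j p 0)) (angle (lam i j p 1)).

Lemma angle_bound_ge0 i j : 0 <= angle_bound i j.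
Proof. exact: bigmax_ge_id. Qed.

Lemma angle_bound_lt1 i j : angle_bound i j < 1.
Proof.
apply/bigmax_ltP; split=> // p _.
have /andP[_ h0] := angle_lt1 (lam i j p 0).
by have /andP[_ h1] := angle_lt1 (lam i j p 1); rewrite gt_max h0 h1.
Qed.

Lemma angle_lam_le_bound i j p t : t = 0 \/ t = 1 ->
  angle (lam i j p t) <= angle_bound i j.
Proof.
move=> ht; apply: (bigmax_sup p) => //.
by rewrite le_max; case: ht => ->; rewrite lexx ?orbT.
Qed.

(* As [angle_bound i j] bounds the angles of the evaluation points of [phi] at
   the endpoints, squeezing by [m] multiplies these angles by [m]
   ([evalT_squeeze]); squeezing is moreover a *-endomorphism of [A]. *)
Definition squeeze (g : Alg R n) i m : Alg R n :=
  fun j r => g j (tent (angle_bound i j) m r).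

Lemma squeeze_in {g} i {m} : inAlg g -> in01 m -> inAlg (squeeze g i m).
Proof.
move=> hg m01 j; rewrite /squeeze.
by apply: tent_CTM; first [exact: angle_bound_ge0 | exact: angle_bound_lt1
                          | exact: hg | exact: m01].
Qed.

Lemma evalT_squeeze g i j m p t : t = 0 \/ t = 1 ->
  evalT (squeeze g i m j) (lam i j p t) = g j (m * angle (lam i j p t)).
Proof.
move=> ht; rewrite evalTE /squeeze; congr (g j _).
by apply: tent_angle01; first [exact: angle_bound_ge0 | exact: angle_bound_lt1
                              | exact: angle_lam_le_bound].
Qed.

Lemma phi_squeeze1 {g} i t : inAlg g -> t = 0 \/ t = 1 ->
  phi (squeeze g i 1) i t = phi g i t.
Proof.
move=> hg ht; have t01 : in01 t by case: ht => ->; [exact: in01_0 | exact: in01_1].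
rewrite (phiE _ (squeeze_in i hg in01_1) i _ t01) (phiE _ hg i _ t01).
apply: (congr1 (padmx (l i))); apply: eq_mxdiag => j; apply: elemFormula_eq => // p.
by rewrite evalT_squeeze // mul1r evalT_angle //; case: (hg j).
Qed.

Lemma phi_squeeze_at0 {g} i {m} : inAlg g -> in01 m ->
  phi (squeeze g i m) i 0 = padmx (l i) (\mxdiag_(j < K)
    \sum_(p < a i j) delta_mx p p *t g j (m * angle (lam i j p 0))).
Proof.
move=> hg m01; rewrite (phiE _ (squeeze_in i hg m01) i _ in01_0).
apply: (congr1 (padmx (l i))); apply: eq_mxdiag => j; rewrite elemFormula_w1 ?w0 //.
by apply: eq_bigr => p _; rewrite evalT_squeeze //; left.
Qed.

Lemma phi_squeeze_at0_cont {g} i : inAlg g ->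
  cont_in mdist_lt (fun m => phi (squeeze g i m) i 0) 0 1.
Proof.
move=> hg; apply: (cont_in_eq _ (fun m m01 => phi_squeeze_at0 i hg m01)).
apply: cont_in_padmx; apply: cont_in_mxdiag => j; apply: cont_in_tens_diag => p.
have /andP[t0 t1] := angle_lt1 (lam i j p 0).
apply: (cont_in_affine (angle (lam i j p 0)) 0 (CTM_cont_in (hg j))) => m /andP[m0 m1].
  by rewrite addr0; apply/andP; split; nra.
by rewrite addr0 mulrC.
Qed.

(* [phi_ext g i] continues [phi g i] from [0, 1] to [-1, 2]: on [-1, 0] and
   on [1, 2] the evaluation points of [phi g i 0 = phi g i 1] are contracted
   along arcs of the circle to [1]. *)
Definition phi_ext (g : Alg R n) i : R -> 'M[C]_(l i) :=
  glue3 (fun x => phi (squeeze g i (ramp (- x))) i 0) (phi g i)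
        (fun x => phi (squeeze g i (ramp (x - 1))) i 1).

Lemma phi_ext_ends {g} i : inAlg g ->
  phi (squeeze g i (ramp (- 0))) i 0 = phi g i 0 /\
  phi g i 1 = phi (squeeze g i (ramp (1 - 1))) i 1.
Proof.
by move=> hg; rewrite oppr0 subrr ramp0 !phi_squeeze1 //; [right | left].
Qed.

Lemma phi_ext_in01 {g} i {t} : inAlg g -> in01 t -> phi_ext g i t = phi g i t.
Proof. by move=> hg; have [e0 e1] := phi_ext_ends i hg; apply: glue3_in01. Qed.

Lemma phi_ext_cont {g} i : inAlg g -> cont_in mdist_lt (phi_ext g i) (-1) 2.
Proof.
move=> hg; have [e0 e1] := phi_ext_ends i hg.
have Q := phi_squeeze_at0_cont i hg.
apply: glue3_cont e0 e1 (cont_in_ramp_left mdist_refl Q) (phi_cont i hg) _.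
apply: (cont_in_eq (cont_in_ramp_right mdist_refl Q)) => x /andP[x1 x2].
by rewrite phi_periodic //; apply: squeeze_in hg _; apply: ramp_in01; lra.
Qed.

(* Every value of [phi_ext g i] is a value of [phi], at an argument obtained
   from [g] by a *-endomorphism. *)
Definition ext_arg i x (g : Alg R n) : Alg R n :=
  glue3 (fun x => squeeze g i (ramp (- x))) (fun _ => g)
        (fun x => squeeze g i (ramp (x - 1))) x.

Definition ext_time : R -> R := glue3 (fun _ => 0) id (fun _ => 1).

Lemma phi_extE g i x : phi_ext g i x = phi (ext_arg i x g) i (ext_time x).
Proof. by rewrite /phi_ext /ext_arg /ext_time /glue3; case: ifP => // _; case: ifP. Qed.

Lemma ext_arg_in i {x g} : -1 <= x <= 2 -> inAlg g -> inAlg (ext_arg i x g).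
Proof.
move=> /andP[x1 x2] hg; rewrite /ext_arg.
apply: (glue3P (fun h => inAlg h)) => [x0|//|x_ge1];
  by apply: squeeze_in hg _; apply: ramp_in01; lra.
Qed.

Lemma ext_time_in01 x : in01 (ext_time x).
Proof.
apply: glue3P => [_|/andP[x0 x1]|_]; [exact: in01_0 | | exact: in01_1].
by apply/andP; split; apply: ltW.
Qed.

Lemma ext_arg_op2 bop i x g h :
  ext_arg i x (opA2 bop g h) = opA2 bop (ext_arg i x g) (ext_arg i x h).
Proof. by rewrite /ext_arg /glue3; case: ifP => // _; case: ifP. Qed.

Lemma ext_arg_op1 uop i x g : ext_arg i x (opA1 uop g) = opA1 uop (ext_arg i x g).
Proof. by rewrite /ext_arg /glue3; case: ifP => // _; case: ifP. Qed.

Definition stretch (s t : R) : R := (1 + 2 * s) * t - s.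

Definition homot (s : R) (g : Alg R n) : Alg R l :=
  fun i t => phi_ext g i (stretch s t).

Lemma stretch_range {s t} : in01 s -> in01 t -> -1 <= stretch s t <= 2.
Proof. by move=> /andP[s0 s1] /andP[t0 t1]; apply/andP; split; rewrite /stretch; nra. Qed.

Lemma stretch_dist s s0 {t} : in01 t -> `|stretch s t - stretch s0 t| <= `|s - s0|.
Proof.
move=> /andP[t0 t1].
have -> : stretch s t - stretch s0 t = (s - s0) * (2 * t - 1) by rewrite /stretch; ring.
by rewrite normrM ler_piMr // ler_norml; apply/andP; split; lra.
Qed.

Lemma homot_in {s g} : in01 s -> inAlg g -> inAlg (homot s g).
Proof.
move=> s01 hg i; split.
  apply/cont01M_cont_in.
  apply: (cont_in_affine (1 + 2 * s) (- s) (phi_ext_cont i hg)) => t t01 //.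
  exact: stretch_range.
have /andP[s0 s1] := s01.
rewrite /homot /stretch mulr0 sub0r mulr1 /phi_ext glue3_le0 ?oppr_le0 //.
rewrite glue3_ge1; last lra.
rewrite opprK phi_periodic; last by apply: squeeze_in hg _; apply: ramp_in01.
by congr (phi (squeeze g i (ramp _)) i 1); ring.
Qed.

Lemma homot_op2 bop s : in01 s ->
  (forall g h, inAlg g -> inAlg h ->
     eqAlg (phi (opA2 bop g h)) (opA2 bop (phi g) (phi h))) ->
  forall g h, inAlg g -> inAlg h ->
    eqAlg (homot s (opA2 bop g h)) (opA2 bop (homot s g) (homot s h)).
Proof.
move=> s01 phi_op g h hg hh i t t01; have x12 := stretch_range s01 t01.
rewrite /homot phi_extE ext_arg_op2.
rewrite (phi_op _ _ (ext_arg_in i x12 hg) (ext_arg_in i x12 hh) i _ (ext_time_in01 _)).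
by rewrite /opA2 /= !phi_extE.
Qed.

Lemma homot_op1 uop s : in01 s ->
  (forall g, inAlg g -> eqAlg (phi (opA1 uop g)) (opA1 uop (phi g))) ->
  forall g, inAlg g -> eqAlg (homot s (opA1 uop g)) (opA1 uop (homot s g)).
Proof.
move=> s01 phi_op g hg i t t01; have x12 := stretch_range s01 t01.
rewrite /homot phi_extE ext_arg_op1.
rewrite (phi_op _ (ext_arg_in i x12 hg) i _ (ext_time_in01 _)).
by rewrite /opA1 /= !phi_extE.
Qed.

Lemma homot_starhom s : in01 s -> is_starhom (homot s).
Proof.
move=> s01; have [_ [hadd [hscale [hmul hstar]]]] := phi_starhom.
split; first by move=> g; apply: homot_in.
split; first exact: (homot_op2 (fun _ x y => x + y) s s01 hadd).
split; first by move=> c; exact: (homot_op1 (fun _ x => c *: x) s s01 (hscale c)).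
split; first exact: (homot_op2 (fun _ x y => x *m y) s s01 hmul).
exact: (homot_op1 (fun _ x => adjmx x) s s01 hstar).
Qed.

Lemma homot0 g : inAlg g -> eqAlg (homot 0 g) (phi g).
Proof.
move=> hg i t t01; rewrite /homot /stretch mulr0 addr0 mul1r subr0.
exact: phi_ext_in01.
Qed.

Lemma homot_cont : pointwise_norm_cont homot.
Proof.
move=> g hg s0 s01 e e0.
have /common_ball[d d0 hd] : forall i, exists2 d : R, 0 < d & forall s, `|s - s0| < d ->
    in01 s -> forall t, in01 t -> mdist_lt (homot s g i t) (homot s0 g i t) e.
  move=> i; have m12 : (-1 : R) <= 2 by lra.
  have [d d0 hd] := cont_in_unif (@mdist_sym _ _ _) (@mdist_tri _ _ _) e m12
    (phi_ext_cont i hg) e0.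
  exists d => // s sd s01' t t01; apply: hd; try exact: stretch_range.
  exact: le_lt_trans (stretch_dist s s0 t01) sd.
by exists d => // s s01' sd i t t01 k k'; apply: hd.
Qed.

(* The Type B data of [homot 1]: the evaluation points and the unitary path
   of [phi], continued to [-1, 2] as in [phi_ext]; the unitary path returns
   from [w 1] to [1] while all evaluation points sit at [1]. *)
Definition lam_ext i j p : R -> C :=
  glue3 (fun x => expi (ramp (- x) * angle (lam i j p 0))) (lam i j p)
        (fun x => expi (ramp (x - 1) * angle (lam i j p 1))).

Definition w_ext i j : R -> 'M[C]_(a i j) :=
  glue3 (fun _ => w i j 0) (w i j) (fun x => w i j (Order.min 1 (4 - 2 * x))).

Lemma lam_ext_cont i j p : cont_in cdist_lt (lam_ext i j p) (-1) 2.
Proof.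
have expi_line t : in01 t -> cont_in cdist_lt (fun u => expi (u * t)) 0 1.
  move=> /andP[t0 t1]; apply: (cont_in_affine t 0 (expi_cont_in 0 1)) => u /andP[u0 u1].
    by rewrite addr0; apply/andP; split; nra.
  by rewrite addr0 mulrC.
apply: glue3_cont.
- by rewrite oppr0 ramp0 mul1r expi_angle // lam_cabs //; exact: in01_0.
- by rewrite subrr ramp0 mul1r expi_angle // lam_cabs //; exact: in01_1.
- exact: (cont_in_ramp_left cdist_refl (expi_line _ (angle_in01 _))).
- exact: lam_cont.
- exact: (cont_in_ramp_right cdist_refl (expi_line _ (angle_in01 _))).
Qed.

Lemma lam_ext_cabs i j p x : -1 <= x <= 2 -> cabs (lam_ext i j p x) = 1.
Proof.
move=> /andP[x1 x2]; apply: (glue3P (fun u => cabs u = 1)) => [_|/andP[x0 x1']|_];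
  rewrite ?expi_cabs //.
by apply: lam_cabs; apply/andP; split; apply: ltW.
Qed.

Lemma lam_ext_ends i j p : lam_ext i j p (-1) = lam_ext i j p 2.
Proof.
have r1 : ramp 1 = 0 :> R by apply: ramp_ge; lra.
rewrite /lam_ext glue3_le0; last lra.
rewrite glue3_ge1; last lra.
by rewrite /= opprK (_ : 2 - 1 = 1 :> R) ?r1 ?mul0r //; lra.
Qed.

Lemma w_ext_unitary i j x : -1 <= x <= 2 -> Defs.unitarymx (w_ext i j x).
Proof.
move=> /andP[x1 x2]; apply: (glue3P (fun M => Defs.unitarymx M)) => [_|/andP[x0 x1']|_];
  apply: w_unitary; first exact: in01_0.
  by apply/andP; split; apply: ltW.
by apply/andP; split; [rewrite le_min ler01 /=; lra | rewrite ge_min lexx].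
Qed.

Lemma w_ext_cont i j : cont_in mdist_lt (w_ext i j) (-1) 2.
Proof.
apply: glue3_cont => //.
- by congr (w i j _); apply/esym/min_idPl; lra.
- exact: (cont_in_const _ _ _ (mdist_refl _)).
- exact: w_cont.
apply: (cont_in_glue (3 / 2)); try lra.
  apply: (cont_in_eq (cont_in_const (w i j 1) _ _ (mdist_refl _))) => x /andP[x1 x2].
  by congr (w i j _); apply/min_idPl; lra.
apply: (cont_in_affine (-2) 4 (w_cont i j)) => x /andP[x1 x2].
  by apply/andP; split; lra.
by congr (w i j _); rewrite (_ : -2 * x + 4 = 4 - 2 * x); [apply/min_idPr; lra | ring].
Qed.

Lemma ext_elem_data i j :
  elem_data 1%g (fun p t => lam_ext i j p (3 * t - 1)) (fun t => w_ext i j (3 * t - 1)).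
Proof.
have m12 t : in01 t -> -1 <= 3 * t - 1 <= 2.
  by move=> /andP[t0 t1]; apply/andP; split; lra.
have e0 : 3 * 0 - 1 = -1 :> R by lra.
have e1 : 3 * 1 - 1 = 2 :> R by lra.
split.
  move=> p; split; last by move=> t /m12; apply: lam_ext_cabs.
  by apply/cont01C_cont_in; apply: (cont_in_affine 3 (-1) (lam_ext_cont i j p)) => t /m12.
split; first by move=> p /=; rewrite perm1 e0 e1; apply: lam_ext_ends.
split.
  by apply/cont01M_cont_in; apply: (cont_in_affine 3 (-1) (w_ext_cont i j)) => t /m12.
split; first by move=> t /m12; apply: w_ext_unitary.
split; first by rewrite /= e0 /w_ext glue3_le0 ?w0 //; lra.
rewrite /= e1 vperm1 /w_ext glue3_ge1 /=; last lra.
have -> : 4 - 2 * 2 = 0 :> R by lra.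
by rewrite (min_idPr ler01) w0.
Qed.

Lemma phi_ext_elem_le0 g i x : inAlg g -> -1 <= x <= 0 -> phi_ext g i x =
  padmx (l i) (\mxdiag_(j < K) elemFormula (lam_ext i j) (w_ext i j) (g j) x).
Proof.
move=> hg /andP[x1 x0]; have r01 : in01 (ramp (- x)) by apply: ramp_in01; lra.
rewrite /phi_ext glue3_le0 // phi_squeeze_at0 //.
apply: (congr1 (padmx (l i))); apply: eq_mxdiag => j.
rewrite elemFormula_w1; last by rewrite /w_ext glue3_le0 // w0.
apply: eq_bigr => p _; rewrite /lam_ext glue3_le0 // evalT_expi //; first by case: (hg j).
exact: in01_mul (angle_in01 _).
Qed.

Lemma phi_ext_elem_mid g i x : inAlg g -> 0 < x < 1 -> phi_ext g i x =
  padmx (l i) (\mxdiag_(j < K) elemFormula (lam_ext i j) (w_ext i j) (g j) x).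
Proof.
move=> hg x01.
have x01' : in01 x by case/andP: x01 => /ltW x0 /ltW x1; rewrite /in01 x0 x1.
rewrite /phi_ext glue3_mid // (phiE _ hg i _ x01').
apply: (congr1 (padmx (l i))); apply: eq_mxdiag => j.
by apply: elemFormula_eq => [|p]; rewrite /w_ext /lam_ext glue3_mid.
Qed.

Lemma phi_ext_elem_ge1 g i x : inAlg g -> 1 <= x <= 2 -> phi_ext g i x =
  padmx (l i) (\mxdiag_(j < K) elemFormula (lam_ext i j) (w_ext i j) (g j) x).
Proof.
move=> hg /andP[x1 x2]; have r01 : in01 (ramp (x - 1)) by apply: ramp_in01; lra.
have g01 j : g j 0 = g j 1 by case: (hg j).
rewrite /phi_ext glue3_ge1 // (phiE _ (squeeze_in i hg r01) i _ in01_1).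
apply: (congr1 (padmx (l i))); apply: eq_mxdiag => j.
have [x32|x32] := leP x (3 / 2).
  apply: elemFormula_eq => [|p].
    by rewrite /w_ext glue3_ge1 //; congr (w i j _); apply/esym/min_idPl; lra.
  rewrite evalT_squeeze; last by right.
  rewrite /lam_ext glue3_ge1 // evalT_expi //.
  exact: in01_mul (angle_in01 _).
have r0 : ramp (x - 1) = 0 by apply: ramp_ge; lra.
have -> : elemFormula (lam i j) (w i j) (squeeze g i (ramp (x - 1)) j) 1 = 1%:M *t g j 0.
  apply: elemFormula_const; first by apply: w_unitary; exact: in01_1.
  by move=> p; rewrite evalT_squeeze ?r0 ?mul0r //; right.
apply/esym/elemFormula_const; first by apply: w_ext_unitary; apply/andP; split; lra.
move=> p; rewrite /lam_ext glue3_ge1 //= r0 mul0r evalT_expi //; exact: in01_0.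
Qed.

Lemma phi_ext_elem g i x : inAlg g -> -1 <= x <= 2 -> phi_ext g i x =
  padmx (l i) (\mxdiag_(j < K) elemFormula (lam_ext i j) (w_ext i j) (g j) x).
Proof.
move=> hg /andP[x1 x2].
have [x0|x_gt0] := leP x 0; first by apply: phi_ext_elem_le0 => //; apply/andP.
have [x_lt1|x_ge1] := ltP x 1; first by apply: phi_ext_elem_mid => //; apply/andP.
by apply: phi_ext_elem_ge1 => //; apply/andP.
Qed.

Hypothesis dims : forall i, (\sum_(j < K) a i j * n j <= l i)%N.

Lemma homot1_typeB : typeB (homot 1) a.
Proof.
split; first exact: dims.
exists (fun i j f t =>
  elemFormula (fun p t => lam_ext i j p (3 * t - 1))
              (fun t => w_ext i j (3 * t - 1)) f t).
split.
  move=> i j; exists 1%g, (fun p t => lam_ext i j p (3 * t - 1)).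
  by exists (fun t => w_ext i j (3 * t - 1)); split; [exact: ext_elem_data | split].
move=> g hg i t /andP[t0 t1].
rewrite /homot (_ : stretch 1 t = 3 * t - 1); last by rewrite /stretch; ring.
by apply: phi_ext_elem => //; apply/andP; split; lra.
Qed.

Lemma homot_typeA_typeB :
  [/\ forall s, in01 s -> is_starhom (homot s),
      forall g, inAlg g -> eqAlg (homot 0 g) (phi g),
      typeB (homot 1) a & pointwise_norm_cont homot].
Proof.
by split; [exact: homot_starhom | exact: homot0 | exact: homot1_typeB | exact: homot_cont].
Qed.

End Homotopy.

Lemma elemType_choice {R : realType} {I J : Type} {n : J -> nat} {a : I -> J -> nat}
    {Phi : forall i j, (R -> 'M[R[i]]_(n j)) -> R -> 'M[R[i]]_(a i j * n j)} :
  (forall i j, elemType false (Phi i j)) ->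
  exists (lam : forall i j, 'I_(a i j) -> R -> R[i])
         (w : forall i j, R -> 'M[R[i]]_(a i j)),
    forall i j, (exists sigma, elem_data sigma (lam i j) (w i j)) /\
      forall f, CTM f -> forall t, in01 t ->
        Phi i j f t = elemFormula (lam i j) (w i j) f t.
Proof.
move=> hPhi.
have data i j : {lw : ('I_(a i j) -> R -> R[i]) * (R -> 'M[R[i]]_(a i j)) |
    (exists sigma, elem_data sigma lw.1 lw.2) /\
    forall f, CTM f -> forall t, in01 t -> Phi i j f t = elemFormula lw.1 lw.2 f t}.
  apply: cid; have [sigma [lam [w [hd [_ hf]]]]] := hPhi i j.
  by exists (lam, w); split; [exists sigma | ].
exists (fun i j => (sval (data i j)).1), (fun i j => (sval (data i j)).2) => i j.
by case: (data i j).
Qed.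

Theorem theorem3p3 (R : realType) (K L : nat) (n : 'I_K -> nat) (l : 'I_L -> nat)
    (phi : Alg R n -> Alg R l) (a : 'I_L -> 'I_K -> nat) :
  is_starhom phi -> typeA phi a ->
  exists phis : R -> Alg R n -> Alg R l,
    (forall s, in01 s -> is_starhom (phis s)) /\
    (forall g, inAlg g -> eqAlg (phis 0 g) (phi g)) /\
    typeB (phis 1) a /\
    pointwise_norm_cont phis.
Proof.
move=> phi_starhom [dims [Phi [Phi_elem phiE]]].
have [lam [w data]] := elemType_choice Phi_elem.
have phi_elem g : inAlg g -> forall i t, in01 t ->
    phi g i t = padmx (l i) (\mxdiag_(j < K) elemFormula (lam i j) (w i j) (g j) t).
  move=> hg i t t01; rewrite phiE //.
  apply: (congr1 (padmx (l i))); apply: eq_mxdiag => j.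
  exact: (data i j).2 _ (hg j) _ t01.
have [] := homot_typeA_typeB phi lam w phi_starhom (fun i j => (data i j).1)
  phi_elem dims.
by exists (homot phi lam).
Qed.
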